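(* For all $m,n\ge2$, $$\#\operatorname{vert}(\Box_m,\Diamond_n)\ge 2n+2mn(2n-1)+2mn(m-1)(n-1).$$
   Context: For convex polytopes $P,Q$, $\operatorname{Hom}(P,Q)$ is the set of maps $P\to Q$ that are restrictions of affine maps $\operatorname{Aff}(P)\to\operatorname{Aff}(Q)$; it is a convex polytope in the affine space of affine maps $\operatorname{Aff}(P)\to\operatorname{Aff}(Q)$, and $\operatorname{vert}(P,Q)$ denotes its set of vertices. $\Box_m=\operatorname{conv}\{(a_1,\ldots,a_m):a_i=\pm1\}\subset\mathbb{R}^m$, $\Diamond_n=\operatorname{conv}(\pm e_1,\ldots,\pm e_n)\subset\mathbb{R}^n$. *)

From HB Require Import structures.
From mathcomp Require Import all_boot all_order all_algebra.
From mathcomp Require Import reals.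
Set Implicit Arguments. Unset Strict Implicit. Unset Printing Implicit Defensive.
Import Order.TTheory GRing.Theory Num.Theory.
Local Open Scope ring_scope.

Section Defs.
Variable R : realType.

Definition conv (k : nat) (pts : seq 'cV[R]_k) (x : 'cV[R]_k) : Prop :=
  exists w : 'I_(size pts) -> R,
    (forall i, 0 <= w i) /\ \sum_i w i = 1 /\ x = \sum_i w i *: pts`_i.

Definition cube_pts (m : nat) : seq 'cV[R]_m :=
  [seq \col_i (if s i then 1 else -1) | s : {ffun 'I_m -> bool}].
Definition cube (m : nat) := conv (cube_pts m).

Definition cross_pts (n : nat) : seq 'cV[R]_n :=
  [seq delta_mx i 0 | i : 'I_n] ++ [seq - delta_mx i 0 | i : 'I_n].
Definition cross (n : nat) := conv (cross_pts n).

Definition affmap (m n : nat) := ('M[R]_(n, m) * 'cV[R]_n)%type.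
Definition app (m n : nat) (f : affmap m n) (x : 'cV[R]_m) : 'cV[R]_n :=
  f.1 *m x + f.2.

(* Hom(P, Q) for P = cube m, Q = cross n (both full-dimensional, so
   Aff(P) = R^m, Aff(Q) = R^n) *)
Definition Hom_cube_cross (m n : nat) (f : affmap m n) : Prop :=
  forall x, @cube m x -> @cross n (app f x).

Definition affcomb (m n : nat) (t : R) (f g : affmap m n) : affmap m n :=
  (t *: f.1 + (1 - t) *: g.1, t *: f.2 + (1 - t) *: g.2).

Definition is_vertex (m n : nat) (K : affmap m n -> Prop) (f : affmap m n) : Prop :=
  K f /\ forall g h t, K g -> K h -> 0 < t < 1 -> f = affcomb t g h -> g = h.

End Defs.

From HB Require Import structures.
From mathcomp Require Import all_boot all_order all_algebra.
From mathcomp Require Import reals.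
From mathcomp Require Import ring lra.
Import Order.TTheory GRing.Theory Num.Theory.
Local Open Scope ring_scope.
Set Implicit Arguments. Unset Strict Implicit.

(* An affine map of the cube into the cross-polytope that sends every vertex
   of the cube to a vertex of the cross-polytope is a vertex of Hom: the
   vertices of the cross-polytope are exposed, so in any convex splitting
   f = t g + (1 - t) h both g and h must agree with f on the vertices of the
   cube, and an affine map is determined by those values.  It therefore
   suffices to exhibit enough such vertex maps:
   - the 2n constant maps;
   - the maps depending on one coordinate x_i only, sending x_i = 1 and
     x_i = -1 to two distinct vertices: m 2n (2n - 1) of them;
   - the maps depending on two coordinates x_i, x_k (i <> k), sending
     (1,1), (1,-1), (-1,1), (-1,-1) to u, e_j', -e_j', -u, where u = +-e_j
     and j' <> j: m (m - 1) 2n (n - 1) of them.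
   They are pairwise distinct because their vertex patterns differ. *)

Section ConvexHull.
Variables (R : realType) (k : nat).

Lemma conv_nth (pts : seq 'cV[R]_k) (l : 'I_(size pts)) : conv pts pts`_l.
Proof.
exists (fun l' => ((l' == l) : nat)%:R); split; first by move=> i; rewrite ler0n.
split.
- by rewrite (bigD1 l) //= eqxx big1 ?addr0 // => i /negbTE ->.
- by rewrite (bigD1 l) //= eqxx scale1r big1 ?addr0 // => i /negbTE ->; rewrite scale0r.
Qed.

Lemma conv_mem (pts : seq 'cV[R]_k) x : x \in pts -> conv pts x.
Proof. by move=> xp; rewrite -(nth_index 0 xp); apply: (conv_nth (Ordinal _)); rewrite index_mem. Qed.

Lemma conv_comb (pts : seq 'cV[R]_k) p (w : 'I_p -> R) (z : 'I_p -> 'cV[R]_k) :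
  (forall j, 0 <= w j) -> \sum_j w j = 1 -> (forall j, conv pts (z j)) ->
  conv pts (\sum_j w j *: z j).
Proof.
move=> w0 w1 /fin_all_exists [W HW].
exists (fun l => \sum_j w j * W j l); split.
  by move=> l; apply: sumr_ge0 => j _; apply: mulr_ge0 => //; case: (HW j).
split.
  rewrite exchange_big /= -w1; apply: eq_bigr => j _.
  by rewrite -mulr_sumr; case: (HW j) => _ [-> _]; rewrite mulr1.
symmetry; under eq_bigr => l _ do rewrite scaler_suml.
rewrite exchange_big /=; apply: eq_bigr => j _.
case: (HW j) => _ [_ ->]; rewrite scaler_sumr; apply: eq_bigr => l _.
by rewrite scalerA.
Qed.

End ConvexHull.

Section CrossPolytope.
Variables (R : realType) (n : nat).

Definition sign (b : bool) : R := if b then 1 else -1.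

Lemma sign_sq b : sign b * sign b = 1.
Proof. by case: b; rewrite /sign ?mulr1 ?mulrNN ?mulr1. Qed.

Definition cross_vtx (u : bool * 'I_n) : 'cV[R]_n := sign u.1 *: delta_mx u.2 0.

Lemma cross_vtxE u r : cross_vtx u r 0 = if r == u.2 then sign u.1 else 0.
Proof. by rewrite /cross_vtx !mxE eqxx andbT; case: eqP => _; rewrite ?mulr1 ?mulr0. Qed.

Lemma cross_vtx_inj : injective cross_vtx.
Proof.
move=> [b j] [b' j'] /matrixP/(_ j 0); rewrite !cross_vtxE /= eqxx.
by case: eqP => [<-|_]; case: b; case: b' => //; rewrite /sign => H; exfalso; lra.
Qed.

Lemma cross_vtxN b j : cross_vtx (~~ b, j) = - cross_vtx (b, j).
Proof. by case: b; rewrite /cross_vtx /sign /= ?scaleN1r ?scale1r ?opprK. Qed.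

Lemma cross_ptsP p : p \in cross_pts R n -> exists u, p = cross_vtx u.
Proof.
rewrite mem_cat => /orP[] /mapP[j _ ->]; [exists (true, j) | exists (false, j)];
  by rewrite /cross_vtx /sign /= ?scale1r ?scaleN1r.
Qed.

Lemma cross_vtx_cross u : cross (cross_vtx u).
Proof.
apply: conv_mem; rewrite mem_cat; case: u => [[] j];
  rewrite /cross_vtx /sign /= ?scale1r ?scaleN1r;
  apply/orP; [left|right]; apply/mapP; exists j; by rewrite ?mem_enum.
Qed.

Lemma cross_pts_face u p : p \in cross_pts R n ->
  p = cross_vtx u \/ sign u.1 * p u.2 0 <= 0.
Proof.
move=> /cross_ptsP [[b j] ->]; rewrite cross_vtxE /=.
case: u => [b' j'] /=; case: (eqVneq j' j) => [->|_]; last by rewrite mulr0; right.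
case: (eqVneq b' b) => [->|]; first by left.
by case: b; case: b' => //= _; right; rewrite /sign; lra.
Qed.

Lemma cross_exposed u y : cross y ->
  sign u.1 * y u.2 0 <= 1 /\ (sign u.1 * y u.2 0 = 1 -> y = cross_vtx u).
Proof.
case=> W [W0 [W1 ->]].
set pt := fun l : 'I_(size (cross_pts R n)) => (cross_pts R n)`_l.
set F := fun l => sign u.1 * pt l u.2 0.
have -> : sign u.1 * (\sum_l W l *: pt l) u.2 0 = \sum_l W l * F l.
  rewrite summxE mulr_sumr; apply: eq_bigr => l _; rewrite mxE /F; ring.
have HF l : pt l = cross_vtx u \/ F l <= 0 by apply/cross_pts_face/mem_nth.
have F1 l : F l <= 1.
  case: (HF l) => [e|]; last by lra.
  by rewrite /F e cross_vtxE eqxx sign_sq.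
split.
  by rewrite -W1; apply: ler_sum => l _; rewrite -[X in _ <= X]mulr1 ler_wpM2l.
move=> S1.
have S0 : \sum_l W l * (1 - F l) = 0.
  rewrite (eq_bigr (fun l => W l - W l * F l)) => [|l _]; last by ring.
  by rewrite sumrB W1 S1 subrr.
have Z l : W l * (1 - F l) = 0.
  by apply: (psumr_eq0P _ S0) => // i _; apply: mulr_ge0 => //; have := F1 i; lra.
rewrite (eq_bigr (fun l => W l *: cross_vtx u)) => [|l _].
  by rewrite -scaler_suml W1 scale1r.
case: (HF l) => [e|Fl0]; first by rewrite -/(pt l) e.
have /eqP := Z l; rewrite mulf_eq0 => /orP[/eqP ->|].
  by rewrite !scale0r.
by rewrite subr_eq0 => /eqP F1l; exfalso; lra.
Qed.

End CrossPolytope.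

Lemma convex_comb_eq_max (R : realFieldType) (t a b c : R) :
  0 < t < 1 -> a <= c -> b <= c -> t * a + (1 - t) * b = c -> a = c /\ b = c.
Proof. by move=> /andP[t0 t1] ac bc e; split; nra. Qed.

Section VertexMaps.
Variables (R : realType) (m n : nat).

Definition cube_vtx (s : {ffun 'I_m -> bool}) : 'cV[R]_m := \col_i (if s i then 1 else -1).

Lemma cube_vtx_cube s : cube (cube_vtx s).
Proof. by apply: conv_mem; apply/mapP; exists s; rewrite ?mem_enum. Qed.

Definition all_true : {ffun 'I_m -> bool} := [ffun _ => true].
Definition flip_at (c : 'I_m) : {ffun 'I_m -> bool} := [ffun x => x != c].

Lemma cube_vtx_all_true_flip_at c : cube_vtx all_true - cube_vtx (flip_at c) = 2 *: delta_mx c 0.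
Proof.
apply/matrixP => i j; rewrite !mxE !ffunE (ord1 j) eqxx andbT.
by case: (eqVneq i c) => _ /=; rewrite ?mulr1 ?mulr0; lra.
Qed.

Lemma affmap_eq_on_cube_vtx (g h : affmap R m n) :
  (forall s, app g (cube_vtx s) = app h (cube_vtx s)) -> g = h.
Proof.
case: g => Ag bg; case: h => Ah bh; rewrite /app /= => E.
have E' s : Ag *m cube_vtx s = Ah *m cube_vtx s + (bh - bg) by rewrite addrA -E addrK.
have EA : Ag = Ah.
  apply/matrixP => r c.
  have : Ag *m (cube_vtx all_true - cube_vtx (flip_at c)) =
         Ah *m (cube_vtx all_true - cube_vtx (flip_at c)).
    by rewrite !mulmxBr !E' opprD addrACA subrr addr0.
  rewrite cube_vtx_all_true_flip_at -!scalemxAr -!colE => /matrixP/(_ r 0).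
  by rewrite !mxE; apply: mulfI; rewrite pnatr_eq0.
by congr (_, _) => //; apply: (addrI (Ag *m cube_vtx all_true)); rewrite E EA.
Qed.

Lemma app_conv_cube (f : affmap R m n) x : cube x ->
  exists2 w : 'I_(size (cube_pts R m)) -> R, (forall l, 0 <= w l) /\ \sum_l w l = 1 &
  app f x = \sum_l w l *: app f (cube_pts R m)`_l.
Proof.
move=> [w [w0 [w1 ->]]]; exists w => //.
rewrite /app; under [RHS]eq_bigr do rewrite scalerDr.
rewrite big_split /= -scaler_suml w1 scale1r mulmx_sumr; congr (_ + _).
by apply: eq_bigr => l _; rewrite scalemxAr.
Qed.

Lemma Hom_of_cube_vtx (f : affmap R m n) :
  (forall s, cross (app f (cube_vtx s))) -> Hom_cube_cross f.
Proof.
move=> fc x /(app_conv_cube f) [w [w0 w1] ->]; apply: conv_comb => // l.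
by have /mapP [s _ ->] := mem_nth 0 (ltn_ord l); apply: fc.
Qed.

Lemma is_vertex_of_cube_vtx (f : affmap R m n) (pat : {ffun 'I_m -> bool} -> bool * 'I_n) :
  (forall s, app f (cube_vtx s) = cross_vtx R (pat s)) -> is_vertex (@Hom_cube_cross R m n) f.
Proof.
move=> Hf; split=> [|g h t Hg Hh t01 E].
  by apply: Hom_of_cube_vtx => s; rewrite Hf; apply: cross_vtx_cross.
apply: affmap_eq_on_cube_vtx => s; set u := pat s.
have Ef : cross_vtx R u = t *: app g (cube_vtx s) + (1 - t) *: app h (cube_vtx s).
  by rewrite -Hf E /app /affcomb /= mulmxDl -!scalemxAl !scalerDr addrACA.
have [g1 g2] := cross_exposed u (Hg _ (cube_vtx_cube s)).
have [h1 h2] := cross_exposed u (Hh _ (cube_vtx_cube s)).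
move: (app g _) (app h _) Ef g1 g2 h1 h2 => y z Ef y1 y2 z1 z2.
have : sign R u.1 * cross_vtx R u u.2 0 = 1 by rewrite cross_vtxE eqxx sign_sq.
rewrite Ef !mxE => e1.
case: (convex_comb_eq_max t01 y1 z1) => [|/y2 -> /z2 -> //].
by rewrite -[RHS]e1; ring.
Qed.

Definition vtx := (bool * 'I_n)%type.

(* the elements of vtx other than v, enumerated by 'I_(2n - 1) *)
Definition other (v : vtx) (t : 'I_#|{: vtx}|.-1) : vtx := enum_val (lift (enum_rank v) t).

Lemma other_neq v t : other v t != v.
Proof.
by apply/eqP => /(congr1 enum_rank); rewrite /other enum_valK => /eqP; rewrite lift_eqF.
Qed.

Lemma other_inj v : injective (other v).
Proof. by move=> t1 t2 /enum_val_inj /lift_inj. Qed.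

Definition vtx_code := (vtx + ('I_m * vtx * 'I_#|{: vtx}|.-1
                             + 'I_m * 'I_m.-1 * vtx * 'I_n.-1))%type.

(* For the two-coordinate maps, k = lift i t is the second coordinate and
   j' = lift u.2 t' the second direction. *)
Definition vtx_pattern (p : vtx_code) (s : {ffun 'I_m -> bool}) : vtx :=
  match p with
  | inl u => u
  | inr (inl (i, v, t)) => if s i then v else other v t
  | inr (inr (i, t, u, t')) =>
      if s i then (if s (lift i t) then u else (true, lift u.2 t'))
      else (if s (lift i t) then (false, lift u.2 t') else (~~ u.1, u.2))
  end.

Definition colmx (i : 'I_m) (d : 'cV[R]_n) : 'M[R]_(n, m) :=
  \matrix_(r, c) (if c == i then d r 0 else 0).

Lemma mulmx_colmx i d x : colmx i d *m x = x i 0 *: d.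
Proof.
apply/matrixP => r j; rewrite !mxE (bigD1 i) //= mxE eqxx big1 ?addr0.
  by rewrite (ord1 j) mulrC.
by move=> c /negbTE ci; rewrite mxE ci mul0r.
Qed.

Definition vtx_map (p : vtx_code) : affmap R m n :=
  match p with
  | inl u => (0, cross_vtx R u)
  | inr (inl (i, v, t)) =>
      let: (a, b) := (cross_vtx R v, cross_vtx R (other v t)) in
      (colmx i (2^-1 *: (a - b)), 2^-1 *: (a + b))
  | inr (inr (i, t, u, t')) =>
      let: (a, b) := (cross_vtx R u, cross_vtx R (true, lift u.2 t')) in
      (colmx i (2^-1 *: (a + b)) + colmx (lift i t) (2^-1 *: (a - b)), 0)
  end.

Lemma app_vtx_map p s : app (vtx_map p) (cube_vtx s) = cross_vtx R (vtx_pattern p s).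
Proof.
case: p => [u|[[[i v] t]|[[[i t] [b j]] t']]]; rewrite /app /=.
- by rewrite mul0mx add0r.
- rewrite mulmx_colmx mxE; case: (s i);
    by apply/matrixP => r c; rewrite !mxE; field.
- rewrite mulmxDl !mulmx_colmx !mxE addr0 -[false]/(~~ true).
  case: (s i); case: (s (lift i t)); rewrite ?cross_vtxN;
    by apply/matrixP => r c; rewrite !mxE; field.
Qed.

Lemma vtx_pattern_inl_inl2 u i v t :
  ~ vtx_pattern (inl u) =1 vtx_pattern (inr (inl (i, v, t))).
Proof.
move=> E; have := E all_true; have := E (flip_at i).
by rewrite /= !ffunE /= eqxx /= => -> /eqP; rewrite (negbTE (other_neq v t)).
Qed.

Lemma vtx_pattern_inl_inr2 u i t u' t' :
  ~ vtx_pattern (inl u) =1 vtx_pattern (inr (inr (i, t, u', t'))).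
Proof.
case: u' => b j E; have := E all_true; have := E (flip_at i).
by rewrite /= !ffunE /= eqxx lift_eqF /= => -> [_ /eqP]; rewrite lift_eqF.
Qed.

Lemma vtx_pattern_inl2_inr2 i v t i' t2 u' t' :
  ~ vtx_pattern (inr (inl (i, v, t))) =1 vtx_pattern (inr (inr (i', t2, u', t'))).
Proof.
case: u' => b j E; have := E all_true; rewrite /= !ffunE /= => ev.
case: (eqVneq i i') => [ei|ni].
  subst i'; have := E (flip_at (lift i t2)); rewrite /= !ffunE /= eqxx eq_liftF /= ev.
  by case=> _ /eqP; rewrite eq_liftF.
have := E (flip_at i'); rewrite /= !ffunE /= eqxx ni lift_eqF /= ev.
by case=> _ /eqP; rewrite eq_liftF.
Qed.

Lemma vtx_pattern_inl2_inj i v t i' v' t' :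
  vtx_pattern (inr (inl (i, v, t))) =1 vtx_pattern (inr (inl (i', v', t'))) ->
  (i, v, t) = (i', v', t').
Proof.
move=> E; have := E all_true; rewrite /= !ffunE /= => ev; subst v'.
have := E (flip_at i); rewrite /= !ffunE /= eqxx eq_sym.
case: (eqVneq i i') => [-> /= /other_inj -> //|_ /= /eqP].
by rewrite (negbTE (other_neq v t)).
Qed.

Lemma vtx_pattern_inr2_inj i t u t' i' t2 u' t2' :
  vtx_pattern (inr (inr (i, t, u, t'))) =1 vtx_pattern (inr (inr (i', t2, u', t2'))) ->
  (i, t, u, t') = (i', t2, u', t2').
Proof.
case: u => b j; case: u' => b' j' E.
have := E all_true; rewrite /= !ffunE /= => -[eb ej]; subst b' j'.
have := E (flip_at i); rewrite /= !ffunE /= eqxx lift_eqF /=.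
case: (eqVneq i i') => [ei|ni]; last first.
  by case: (eqVneq (lift i' t2) i) => _ /= [] // _ /eqP; rewrite lift_eqF.
subst i'; rewrite lift_eqF /= => /(congr1 snd) /lift_inj <-.
case: (eqVneq t t2) => [<- //|nt].
have := E (flip_at (lift i t)); rewrite /= !ffunE /= eqxx eq_liftF /=.
by rewrite eq_sym (inj_eq lift_inj) (negbTE nt) => -[_ /eqP]; rewrite lift_eqF.
Qed.

Lemma vtx_pattern_inj p q : vtx_pattern p =1 vtx_pattern q -> p = q.
Proof.
case: p => [u|[[[i v] t]|[[[i t] u] t']]];
  case: q => [u'|[[[i' v'] t2]|[[[i' t2] u'] t2']]] E.
- by have := E all_true => /= ->.
- by case: (vtx_pattern_inl_inl2 E).
- by case: (vtx_pattern_inl_inr2 E).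
- by case: (vtx_pattern_inl_inl2 (fsym E)).
- by rewrite (vtx_pattern_inl2_inj E).
- by case: (vtx_pattern_inl2_inr2 E).
- by case: (vtx_pattern_inl_inr2 (fsym E)).
- by case: (vtx_pattern_inl2_inr2 (fsym E)).
- by rewrite (vtx_pattern_inr2_inj E).
Qed.

Lemma vtx_map_inj : injective vtx_map.
Proof.
move=> p q E; apply: vtx_pattern_inj => s; apply: (@cross_vtx_inj R).
by rewrite -!app_vtx_map E.
Qed.

Lemma card_vtx_code :
  #|{: vtx_code}| = (2 * n + 2 * m * n * (2 * n - 1) + 2 * m * n * (m - 1) * (n - 1))%N.
Proof.
by rewrite !card_sum !card_prod !card_ord card_bool !subn1; ring.
Qed.

End VertexMaps.

(* The bound holds for all m and n. *)
Theorem proposition7p1 (R : realType) (m n : nat) (hm : (2 <= m)%N) (hn : (2 <= n)%N) :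
  exists v : 'I_(2 * n + 2 * m * n * (2 * n - 1) + 2 * m * n * (m - 1) * (n - 1))
               -> affmap R m n,
    injective v /\ forall i, is_vertex (@Hom_cube_cross R m n) (v i).
Proof.
pose code i := enum_val (cast_ord (esym (card_vtx_code m n)) i).
exists (fun i => vtx_map R (code i)); split.
  by move=> i j /vtx_map_inj /enum_val_inj /cast_ord_inj.
move=> i; exact: is_vertex_of_cube_vtx (app_vtx_map R (code i)).
Qed.
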